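(* Let $\mathcal{G}=(G;T_1,T_2;\theta)\in\mathcal{G}_2^{sym}$ with $\mathcal{G}\neq\mathcal{K}_1$. Then $s_\theta$ fixes exactly one vertex of $G$, and this vertex has even degree at least $4$.
   Context: A multi-graph is finite and loop-free, possibly with parallel edges. A $2$-tree decomposition is $(G;T_1,T_2)$ with $G$ a multi-graph and $T_1,T_2$ spanning trees of $G$ whose edge sets partition $E(G)$. Let $\mathbb{Z}_2=\langle s\rangle$. A $\mathbb{Z}_2$-symmetric multi-graph is a pair $(G,\theta)$ with $\theta:\mathbb{Z}_2\to\mathrm{Aut}(G)$ a non-trivial homomorphism; write $s_\theta=\theta(s)$ and for an edge $e=v_1v_2$, $s_\theta(e)=s_\theta(v_1)s_\theta(v_2)$. A vertex $v$ (edge $e$) is fixed if $s_\theta(v)=v$ ($s_\theta(e)=e$). A symmetric $2$-tree decomposition is $(G;T_1,T_2;\theta)$ where $(G;T_1,T_2)$ is a $2$-tree decomposition, $(G,\theta)$ is $\mathbb{Z}_2$-symmetric and $s_\theta(T_i)=T_i$ for $i=1,2$. $\mathcal{G}_2^{sym}$ denotes the set of symmetric $2$-tree decompositions with no fixed edges, together with $\mathcal{K}_1=(K_1;T_1,T_2;\theta)$ where $K_1$ is a single vertex, the $T_i$ are edgeless and $\theta$ is trivial. *)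

(* A finite loop-free multigraph is given by finite types
   V (vertices) and E (edges) with endpoint maps src, tgt : E -> V
   (src e != tgt e); parallel edges are allowed. *)
From mathcomp Require Import all_boot.
Set Implicit Arguments. Unset Strict Implicit. Unset Printing Implicit Defensive.

Section Multigraph.
Variables (V E : finType) (src tgt : E -> V).

Definition joins (e : E) (x y : V) : bool :=
  ((src e == x) && (tgt e == y)) || ((src e == y) && (tgt e == x)).

Definition adjF (F : {set E}) : rel V := fun x y => [exists e in F, joins e x y].

Definition connectedF (F : {set E}) : Prop := forall x y : V, connect (adjF F) x y.

(* es, vs describe a cycle in F: k >= 2 distinct edges, k distinct vertices,
   edge i joins vertex i and vertex i+1 (mod k). *)
Definition is_cycle (F : {set E}) (es : seq E) (vs : seq V) : bool :=
  [&& 2 <= size es, size vs == size es, uniq es, uniq vs,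
      all (fun e => e \in F) es
    & all2 (fun e p => joins e p.1 p.2) es (zip vs (rot 1 vs))].

Definition acyclicF (F : {set E}) : Prop := forall es vs, ~~ is_cycle F es vs.

Definition spanning_tree (F : {set E}) : Prop := connectedF F /\ acyclicF F.

Definition two_tree_decomposition (T1 T2 : {set E}) : Prop :=
  [/\ spanning_tree T1, spanning_tree T2, T1 :&: T2 = set0 & T1 :|: T2 = setT].

Definition automorphism (sv : V -> V) (se : E -> E) : Prop :=
  [/\ bijective sv, bijective se & forall e, joins (se e) (sv (src e)) (sv (tgt e))].

(* a non-trivial homomorphism Z2 -> Aut(G), given by the image s_theta = (sv, se)
   of the generator: an automorphism that is an involution and not the identity *)
Definition Z2_symmetry (sv : V -> V) (se : E -> E) : Prop :=
  [/\ automorphism sv se, (forall v, sv (sv v) = v), (forall e, se (se e) = e)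
    & ~ ((forall v, sv v = v) /\ (forall e, se e = e))].

Definition symmetric_two_tree_decomposition (T1 T2 : {set E}) sv se : Prop :=
  [/\ two_tree_decomposition T1 T2, Z2_symmetry sv se,
      se @: T1 = T1 & se @: T2 = T2].

Definition no_fixed_edges (se : E -> E) : Prop := forall e, se e != e.

(* degree (loop-free, so each incident edge counts once) *)
Definition degree (v : V) : nat := #|[set e | (src e == v) || (tgt e == v)]|.

End Multigraph.

From mathcomp Require Import all_boot.
Set Implicit Arguments. Unset Strict Implicit. Unset Printing Implicit Defensive.

(* Existence and uniqueness of the fixed vertex only use one of the trees, and
   rest on the cut property: removing an edge of a tree separates its ends.
   If s fixed no vertex, take a shortest path v = x0, x1, ..., xk = s v. Without
   the edge s(x0 x1), x1 is still connected to v and, through the image of the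
   path x1 ... xk, to s x1; since s(x0 x1) separates s v from s x1, it must be the
   last edge of the path, so x(k-1) = s x1 and x1 ... x(k-1) is a shorter path of
   the same kind. If u != w were both fixed, with e = u x the first edge of the
   path from u to w, then without s e the vertex x would be connected to u (by e),
   to w, and to s x (by the image of the path), although s e joins u and s x.
   At the fixed vertex, s permutes the incident edges of each tree without fixed
   points, and each tree has such an edge, so each contributes an even number
   at least 2 to the degree. *)

Lemma fixfree_involution_card_even (T : finType) (f : T -> T) (A : {pred T}) :
  involutive f -> (forall x, f x != x) -> (forall x, (f x \in A) = (x \in A)) ->
  ~~ odd #|A|.
Proof.
move=> fK fx_neq fA.
have order2 x : order f x = 2.
  apply: (@order_cycle _ f [:: x; f x]); rewrite /= ?fK ?eqxx ?inE ?eqxx //.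
  by rewrite andbT eq_sym fx_neq.
have <- : fcard f A * 2 = #|A|.
  apply: (fcard_order_set (can_inj fK)).
  - by apply/subsetP => x _; rewrite inE order2.
  - by move=> x y /eqP <-; rewrite fA.
by rewrite oddM andbF.
Qed.

Lemma connect_uniq_path (T : finType) (r : rel T) x y :
  connect r x y -> exists2 p, uniq (x :: p) & path r x p /\ last x p = y.
Proof.
by case/connectP=> p0 /shortenP[p rp up _] ->; exists p.
Qed.

Section Multigraph.

Variables (V E : finType) (src tgt : E -> V).
Hypothesis loopfree : forall e, src e != tgt e.

Local Notation joins := (joins src tgt).
Local Notation adjF := (adjF src tgt).

Definition incident (e : E) (x : V) : bool := (src e == x) || (tgt e == x).

Lemma joinsC e x y : joins e x y = joins e y x.
Proof. by rewrite /joins orbC. Qed.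

Lemma connect_adjF_sym F : connect_sym (adjF F).
Proof.
apply: sym_connect_sym => x y.
by apply/existsP/existsP => -[e /andP[eF j]]; exists e; rewrite eF joinsC.
Qed.

Lemma joins_incident e x y : joins e x y -> incident e x && incident e y.
Proof. by case/orP=> /andP[/eqP<- /eqP<-]; rewrite /incident !eqxx ?orbT. Qed.

Lemma joins_neq e x y : joins e x y -> x != y.
Proof. by case/orP=> /andP[/eqP<- /eqP<-]; rewrite // eq_sym. Qed.

Lemma incident_joins e x y z : joins e x y -> incident e z -> (z == x) || (z == y).
Proof.
by case/orP=> /andP[/eqP<- /eqP<-] /orP[]/eqP->; rewrite eqxx ?orbT.
Qed.

Lemma joins_other_end e x y z : joins e x z -> joins e y z -> x = y.
Proof.
have /eqP st := loopfree e.
by case/orP=> /andP[/eqP ? /eqP ?] /orP[]/andP[/eqP ? /eqP ?]; congruence.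
Qed.

Lemma path_setD1 F e z x p :
  incident e z -> z \notin x :: p -> path (adjF F) x p -> path (adjF (F :\ e)) x p.
Proof.
move=> ez; elim: p x => [//|y p IHp] x; rewrite in_cons => /norP[zx zyp] /=.
case/andP=> /existsP[f /andP[fF xy]] yp; rewrite IHp // andbT.
apply/existsP; exists f; rewrite !inE fF xy !andbT.
apply/eqP => fe; subst f; case/orP: (incident_joins xy ez) => [zx'|/eqP zy].
  by rewrite zx' in zx.
by rewrite zy mem_head in zyp.
Qed.

Lemma uniq_path_tail_connect F e x y p :
  uniq (x :: y :: p) -> path (adjF F) x (y :: p) -> incident e x ->
  connect (adjF (F :\ e)) y (last y p).
Proof.
case/andP=> xyp _ /andP[_ yp] ex; apply/connectP; exists p => //.
exact: path_setD1 ex xyp yp.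
Qed.

Lemma uniq_path_edges F x p :
  uniq (x :: p) -> path (adjF F) x p ->
  exists es : seq E, [/\ size es = size p, uniq es, {subset es <= F},
    all2 (fun e xy => joins e xy.1 xy.2) es (zip (belast x p) p)
    & {in es, forall e, (src e \in x :: p) && (tgt e \in x :: p)}].
Proof.
elim: p x => [|y p IHp] x; first by exists [::].
case/andP=> xyp uyp /andP[/existsP[f /andP[fF xy]] yp].
have [es [size_es uniq_es esF all_es ends_es]] := IHp y uyp yp.
have end_f z : incident f z -> z \in x :: y :: p.
  by move=> fz; case/orP: (incident_joins xy fz) => /eqP->; rewrite !inE eqxx ?orbT.
exists (f :: es); split=> /=.
- by rewrite size_es.
- rewrite uniq_es andbT; apply: contra xyp => /ends_es/andP[sf tf].
  by case/andP: (joins_incident xy) => /orP[]/eqP<-.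
- by move=> e /predU1P[->|/esF].
- by rewrite xy all_es.
- move=> e /predU1P[->|/ends_es/andP[se te]].
    by rewrite !end_f // /incident eqxx ?orbT.
  by rewrite in_cons se orbT in_cons te orbT.
Qed.

Lemma acyclic_cut F e x z :
  acyclicF src tgt F -> e \in F -> joins e x z -> ~~ connect (adjF (F :\ e)) x z.
Proof.
move=> acF eF exz; apply/negP => /connect_uniq_path[p uxp [xp pz]].
have [es [size_es uniq_es esF all_es _]] := uniq_path_edges uxp xp.
apply: (negP (acF (e :: es) (z :: belast x p))).
have p_neq0 : p != [::].
  by case: p pz {uxp xp size_es all_es} => //= xz; move: (joins_neq exz); rewrite xz eqxx.
(* The cycle is listed from z, so that its first edge is e. *)
have rot_xp : rot 1 (z :: belast x p) = x :: p by rewrite rot1_cons -pz -lastI.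
have uniq_belast : uniq (rcons (belast x p) z) by rewrite -pz -lastI.
rewrite rcons_uniq in uniq_belast.
rewrite /is_cycle /= size_belast size_es eqxx uniq_belast rot_xp /= joinsC exz all_es.
rewrite ltnS lt0n size_eq0 p_neq0 eF uniq_es /= !andbT.
apply/andP; split; first by apply/negP => /esF; rewrite !inE eqxx.
by apply/allP => f /esF; rewrite inE => /andP[].
Qed.

Lemma uniq_path_last_edge F e x y z p :
  uniq (x :: p) -> path (adjF F) x p -> last x p = z -> joins e y z ->
  ~~ connect (adjF (F :\ e)) x z ->
  exists2 r, p = rcons r z & path (adjF F) x r /\ last x r = y.
Proof.
move=> + + pz; subst z; case/lastP: p => [|r z]; first by rewrite connect0.
rewrite -rcons_cons rcons_uniq last_rcons rcons_path.
move=> /andP[z_notin_xr _] /andP[xr /existsP[f /andP[fF rz]]] eyz no_conn.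
have fe : f = e.
  apply/eqP; apply: contraNT no_conn => fe; apply/connectP.
  exists (rcons r z); last by rewrite last_rcons.
  case/andP: (joins_incident eyz) => _ ez.
  rewrite rcons_path (path_setD1 ez z_notin_xr xr).
  by apply/existsP; exists f; rewrite !inE fe fF rz.
subst f; exists r => //; split=> //; exact: joins_other_end rz eyz.
Qed.

Lemma connected_incident F v w :
  connectedF src tgt F -> w != v -> exists2 e, e \in F & incident e v.
Proof.
move=> F_conn wv; case/connectP: (F_conn v w) => [[|x p] /= vp wp].
  by rewrite wp eqxx in wv.
case/andP: vp => /existsP[e /andP[eF vx]] _; exists e => //.
by case/andP: (joins_incident vx).
Qed.

Lemma nontrivial_symmetry_two_vertices (sv : V -> V) (se : E -> E) :
  ~ ((forall v, sv v = v) /\ (forall e, se e = e)) -> exists v w : V, w != v.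
Proof.
move=> nontriv; have [e _ | no_edge] := pickP (@predT E).
  by exists (src e), (tgt e); rewrite eq_sym loopfree.
have [v sv_neq | sv_id] := pickP (fun v => sv v != v); first by exists v, (sv v).
by case: nontriv; split=> [v | e]; [apply/eqP/negbFE/sv_id | move: (no_edge e)].
Qed.

Lemma degree_split T1 T2 v :
  T1 :&: T2 = set0 -> T1 :|: T2 = setT ->
  degree src tgt v = #|[set e in T1 | incident e v]| + #|[set e in T2 | incident e v]|.
Proof.
move=> T12_disj T12_cover; rewrite /degree -(cardsID T1).
congr (_ + _); apply: eq_card => e.
  by rewrite !inE andbC.
move/setP/(_ e): T12_disj; move/setP/(_ e): T12_cover.
by rewrite !inE; case: (e \in T1); case: (e \in T2); rewrite /incident ?andbF.
Qed.

Section Involution.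

Variables (sv : V -> V) (se : E -> E).
Hypotheses (se_joins : forall e, joins (se e) (sv (src e)) (sv (tgt e)))
  (svK : involutive sv) (seK : involutive se) (se_fixfree : forall e, se e != e).

Lemma joins_se e x y : joins e x y -> joins (se e) (sv x) (sv y).
Proof. by case/orP=> /andP[/eqP<- /eqP<-]; rewrite // joinsC. Qed.

Lemma incident_se e v : incident (se e) (sv v) = incident e v.
Proof.
rewrite /incident -!(inj_eq (can_inj svK) _ v).
by case/orP: (se_joins e) => /andP[/eqP-> /eqP->]; rewrite // orbC.
Qed.

Lemma connect_se (F F' : {set E}) x y : {in F, forall e, se e \in F'} ->
  connect (adjF F) x y -> connect (adjF F') (sv x) (sv y).
Proof.
move=> FF' /connectP[p xp ->]; apply/connectP; exists (map sv p); last by rewrite last_map.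
elim: p x xp => [//|z p IHp] x /= /andP[/existsP[e /andP[eF xz]] zp].
by rewrite IHp // andbT; apply/existsP; exists (se e); rewrite FF' // joins_se.
Qed.

Variable T : {set E}.
Hypotheses (T_connected : connectedF src tgt T) (T_acyclic : acyclicF src tgt T)
  (seT : se @: T = T).

Lemma mem_se_tree e : (se e \in T) = (e \in T).
Proof. by rewrite -{1}seT mem_imset //; apply: can_inj seK. Qed.

Lemma connect_se_setD1 e x y :
  connect (adjF (T :\ e)) x y -> connect (adjF (T :\ se e)) (sv x) (sv y).
Proof.
by apply: connect_se => f; rewrite !inE mem_se_tree (inj_eq (can_inj seK)).
Qed.

Lemma tree_involution_fixed_point (v0 : V) : exists v, sv v = v.
Proof.
suff fixed_from_path n v p : size p < n -> uniq (v :: p) ->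
    path (adjF T) v p -> last v p = sv v -> exists v, sv v = v.
  have [p0 up0 [vp0 pv0]] := connect_uniq_path (T_connected v0 (sv v0)).
  exact: (fixed_from_path (size p0).+1 v0 p0 (ltnSn _) up0 vp0 pv0).
elim: n v p => // n IHn v [|x q] size_q uvq; first by move=> _ /esym sv_v; exists v.
move=> vxq xq_sv; case/andP: (vxq) => /existsP[e /andP[eT vx]] xq.
have x_sv : connect (adjF (T :\ e)) x (sv v).
  by rewrite -xq_sv; apply: uniq_path_tail_connect uvq vxq _; case/andP: (joins_incident vx).
have sx_v : connect (adjF (T :\ se e)) (sv x) v.
  by rewrite -[X in connect _ _ X]svK; apply: connect_se_setD1.
have v_x : connect (adjF (T :\ se e)) v x.
  by apply: connect1; apply/existsP; exists e; rewrite !inE eq_sym se_fixfree eT.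
have se_eT : se e \in T by rewrite mem_se_tree.
have x_sv_cut : ~~ connect (adjF (T :\ se e)) x (sv v).
  apply: contra (acyclic_cut T_acyclic se_eT (joins_se vx)) => x_sv'.
  by rewrite connect_adjF_sym; apply: connect_trans (connect_trans sx_v v_x) x_sv'.
have uxq : uniq (x :: q) by case/andP: uvq.
have sx_sv : joins (se e) (sv x) (sv v) by rewrite joinsC joins_se.
have [r q_def [xr r_sx]] := uniq_path_last_edge uxq xq xq_sv sx_sv x_sv_cut.
apply: (IHn x r) => //.
  by move: size_q; rewrite /= q_def size_rcons !ltnS => /ltnW.
by move: uxq; rewrite q_def -rcons_cons rcons_uniq => /andP[].
Qed.

Lemma tree_involution_fixed_point_uniq u w : sv u = u -> sv w = w -> w = u.
Proof.
move=> sv_u sv_w; apply/eqP; apply: contraT => w_neq_u.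
have [[|x p] uuxp [uxp xp_w]] := connect_uniq_path (T_connected u w).
  by rewrite -xp_w eqxx in w_neq_u.
case/andP: (uxp) => /existsP[e /andP[eT ux]] _.
have se_ux : joins (se e) u (sv x) by rewrite -[X in joins _ X]sv_u joins_se.
have x_w : connect (adjF (T :\ e)) x w.
  by rewrite -xp_w; apply: uniq_path_tail_connect uuxp uxp _; case/andP: (joins_incident ux).
have x_w' : connect (adjF (T :\ se e)) x w.
  by rewrite -xp_w; apply: uniq_path_tail_connect uuxp uxp _; case/andP: (joins_incident se_ux).
have sx_w : connect (adjF (T :\ se e)) (sv x) w by rewrite -sv_w; apply: connect_se_setD1.
have u_x : connect (adjF (T :\ se e)) u x.
  by apply: connect1; apply/existsP; exists e; rewrite !inE eq_sym se_fixfree eT.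
have se_eT : se e \in T by rewrite mem_se_tree.
case/negP: (acyclic_cut T_acyclic se_eT se_ux).
by apply: connect_trans (connect_trans u_x x_w') _; rewrite connect_adjF_sym.
Qed.

Lemma tree_involution_fixed_star_even v :
  sv v = v -> ~~ odd #|[set e in T | incident e v]|.
Proof.
move=> sv_v; apply: fixfree_involution_card_even seK se_fixfree _ => e.
by rewrite !inE mem_se_tree -[X in incident _ X]sv_v incident_se.
Qed.

Lemma tree_involution_fixed_star_gt1 v w :
  sv v = v -> w != v -> 1 < #|[set e in T | incident e v]|.
Proof.
move=> sv_v w_neq_v; have [e eT ev] := connected_incident T_connected w_neq_v.
have : 0 < #|[set e in T | incident e v]| by apply/card_gt0P; exists e; rewrite inE eT.
by move: (tree_involution_fixed_star_even sv_v); case: #|_| => [|[]].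
Qed.

End Involution.

End Multigraph.

Theorem lemma5p2 (V E : finType) (src tgt : E -> V)
  (loopfree : forall e, src e != tgt e)
  (T1 T2 : {set E}) (sv : V -> V) (se : E -> E)
  (Hsym : symmetric_two_tree_decomposition src tgt T1 T2 sv se)
  (Hnofix : no_fixed_edges se) :
  exists v : V,
    [/\ sv v = v, (forall w, sv w = w -> w = v),
        ~~ odd (degree src tgt v) & 4 <= degree src tgt v].
Proof.
case: Hsym => [[[T1_conn T1_acyc] [T2_conn _] T12_disj T12_cover]
  [[_ _ se_joins] svK seK nontriv] seT1 seT2].
have [u [w w_neq_u]] := nontrivial_symmetry_two_vertices loopfree nontriv.
have [v sv_v] :=
  tree_involution_fixed_point loopfree se_joins svK seK Hnofix T1_conn T1_acyc seT1 u.
have fixed_uniq :=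
  tree_involution_fixed_point_uniq loopfree se_joins seK Hnofix T1_conn T1_acyc seT1 sv_v.
have [x x_neq_v] : exists x, x != v.
  by case: (eqVneq u v) => [<-|u_neq_v]; [exists w | exists u].
have star_even (T : {set E}) (seT : se @: T = T) :=
  tree_involution_fixed_star_even se_joins svK seK Hnofix seT sv_v.
have star_gt1 (T : {set E}) (T_conn : connectedF src tgt T) (seT : se @: T = T) :=
  tree_involution_fixed_star_gt1 se_joins svK seK Hnofix T_conn seT sv_v x_neq_v.
exists v; split=> //; rewrite (degree_split src tgt v T12_disj T12_cover).
  by rewrite oddD (negbTE (star_even _ seT1)) (negbTE (star_even _ seT2)).
exact: leq_add (star_gt1 _ T1_conn seT1) (star_gt1 _ T2_conn seT2).
Qed.
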